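(* Let $T_+$, $T_-$, $T_0$ be ordered (classical or virtual) tangle diagrams which coincide, including the orderings of their endpoints, outside a small disk, inside which $T_+$ consists of a positive crossing of two oriented arcs, $T_-$ of a negative crossing of the same two oriented arcs, and $T_0$ of the orientation-respecting smoothing of that crossing. Then $$\nabla(T_+)-\nabla(T_-)=z\,\nabla(T_0).$$
   Context: An $n$-tangle ($n\ge 1$) is a collection of $n$ disjoint oriented intervals (''strings'') and finitely many oriented circles (''closed components'') properly embedded in the 3-ball with string endpoints at $2n$ prescribed boundary points, represented by diagrams; virtual diagrams may also contain virtual crossings. For a string, its source is its input and its target its output. A tangle with $n$ strings is ordered if its $2n$ endpoints are numbered by integers $j_1<\dots<j_{2n}$ (up to monotone relabeling) so that every input receives some $j_{2k-1}$ and every output some $j_{2k}$; the ordering is coherent if for each $k$ the string with input $j_{2k-1}$ has output $j_{2k}$. For an ordered tangle diagram $D$: a state $S$ is a set of classical crossings; $D(S)$ is obtained by smoothing each crossing of $S$ respecting orientations and inherits the endpoint numbering. $S$ is coherent if $D(S)$ has no closed components and its ordering is coherent. For coherent $S$, traverse $D(S)$ along the string from $j_1$ to $j_2$, then the string from $j_3$ to $j_4$, etc.; the neighborhood of each smoothed crossing is passed twice, and $S$ is descending if for each crossing of $S$ its neighborhood is first entered along the former overpass. $\operatorname{sign}(S)$ is the product of local writhes of the crossings of $S$. Define $c_n(D)=\sum\operatorname{sign}(S)$ over descending states with $n$ crossings and $\nabla(D)=\sum_{n\ge0}c_n(D)z^n\in\mathbb Z[z]$; this is an invariant of ordered tangles.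 *)

From HB Require Import structures.
From mathcomp Require Import all_boot all_order all_algebra all_fingroup.
Set Implicit Arguments. Unset Strict Implicit. Unset Printing Implicit Defensive.
Import GRing.Theory.
Local Open Scope ring_scope.

(* A tangle diagram with [n] strings on a finite set [N] of "nodes" (small disks).
   Ends of arcs:
   - [inl k] as an outgoing end = boundary point j_{2k+1} (0-based position 2k),
     an input (source of a string); as an incoming end = boundary point at
     0-based position 2k+1, an output (target of a string).  Thus the ordering
     condition "inputs get odd j's, outputs get even j's" is built in.
   - [inr (v, b)] : the exit (as outgoing end) / entrance (as incoming end)
     of node [v] along its strand [b] ([true] = over strand, [false] = under).
   [link x] is the incoming end reached by following the oriented arc that
   starts at the outgoing end [x] (virtual crossings are invisible).
   [kind v] = [Some true] : a positive classical crossing,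
              [Some false] : a negative classical crossing,
              [None] : no crossing; the disk contains the orientation-respecting
                       smoothing: entrance (v,b) continues to exit (v, ~~b).
   For a classical crossing, entrance (v,b) continues to exit (v,b). *)
Record tdiag (n : nat) (N : finType) := TDiag {
  kind : N -> option bool;
  link : {perm ('I_n + (N * bool))}
}.

Section Nabla.
Variables (n : nat) (N : finType).
Implicit Types (D : tdiag n N) (S : {set N}).

Definition pass D (e : N * bool) : N * bool :=
  (e.1, if kind D e.1 is None then ~~ e.2 else e.2).

Fixpoint walk_aux D (fuel : nat) (x : 'I_n + (N * bool))
  : seq (N * bool) * option 'I_n :=
  match fuel with
  | 0 => ([::], None)
  | f.+1 =>
    match link D x with
    | inl k => ([::], Some k)
    | inr e => let r := walk_aux D f (inr (pass D e)) in (e :: r.1, r.2)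
    end
  end.

(* the string starting at input k (fuel is sufficient: no entrance repeats) *)
Definition walk D (k : 'I_n) := walk_aux D (2 * #|N|).+1 (inl k).

Definition crossings D : {set N} := [set v | kind D v != None].

Definition smoothS D S : tdiag n N :=
  TDiag (fun v => if v \in S then None else kind D v) (link D).

Definition no_closed D : bool :=
  [forall e : N * bool, [exists k : 'I_n, e \in (walk D k).1]].

(* the ordering is coherent: string from j_{2k-1} ends at j_{2k} *)
Definition coherent_order D : bool :=
  [forall k : 'I_n, (walk D k).2 == Some k].

Definition coherent D S : bool :=
  no_closed (smoothS D S) && coherent_order (smoothS D S).

Definition traversal D : seq (N * bool) :=
  flatten [seq (walk D k).1 | k <- enum 'I_n].

Definition descending D S : bool :=
  [forall v in S, index (v, true) (traversal (smoothS D S))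
                   < index (v, false) (traversal (smoothS D S))]%N.

Definition sgnS D S : int :=
  \prod_(v in S) (if kind D v == Some true then 1 else -1).

Definition coef D (m : nat) : int :=
  \sum_(S : {set N} | [&& S \subset crossings D, #|S| == m,
                          coherent D S & descending D S]) sgnS D S.

Definition nabla D : {poly int} :=
  \sum_(m < #|N|.+1) coef D m *: 'X^m.

(* crossing change at c0: exchange over/under strand labels *)
Definition swap_at (c0 : N) (x : 'I_n + (N * bool)) : 'I_n + (N * bool) :=
  match x with
  | inr (v, b) => if v == c0 then inr (v, ~~ b) else x
  | _ => x
  end.

End Nabla.

From HB Require Import structures.
From mathcomp Require Import all_boot all_order all_algebra all_fingroup.
Set Implicit Arguments. Unset Strict Implicit. Unset Printing Implicit Defensive.
Import GRing.Theory.
Local Open Scope ring_scope.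

(* A state avoiding c0 contributes the
   same to T+ and T-: the crossing change only exchanges the over/under labels
   of c0, which no state avoiding c0 can see.  If c0 is in S, smoothing S in
   T+, and in T- up to that exchange of labels, yields exactly T0 smoothed along
   S minus c0.  Hence the coherence conditions agree, and since the two entrances
   of c0 are met in some order, the descending condition at c0 holds in exactly
   one of T+ and T-.  Its local writhe +1 or -1 then turns the difference of the
   two terms into z times the T0 term of S minus c0. *)

Lemma forall_in_setD1 (T : finType) (S : {set T}) (c : T) (P : pred T) :
  c \in S -> [forall v in S, P v] = P c && [forall v in S :\ c, P v].
Proof.
move=> cS; apply/forallP/andP => [H|[Pc H] v].
  split; first exact: implyP (H c) cS.
  by apply/forallP => v; apply/implyP; rewrite in_setD1 => /andP[_ /(implyP (H v))].
apply/implyP => vS; have [-> //|ne] := eqVneq v c.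
by apply: implyP (forallP H v) _; rewrite in_setD1 ne.
Qed.

Section Diagrams.
Variables (n : nat) (N : finType).
Implicit Types (D : tdiag n N) (S : {set N}).

Definition lift_end (f : N * bool -> N * bool) (x : 'I_n + (N * bool)) :=
  if x is inr e then inr (f e) else x.

Lemma walk_aux_ext D1 D2 : kind D1 =1 kind D2 -> link D1 =1 link D2 ->
  forall fuel x, walk_aux D1 fuel x = walk_aux D2 fuel x.
Proof.
move=> eq_kind eq_link; elim=> [|fuel IH] x //=.
by rewrite eq_link; case: (link D2 x) => //= e; rewrite /pass eq_kind IH.
Qed.

Lemma walk_aux_relabel (f : N * bool -> N * bool) D1 D2 :
    (forall x, link D2 (lift_end f x) = lift_end f (link D1 x)) ->
    (forall e, pass D2 (f e) = f (pass D1 e)) ->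
  forall fuel x, walk_aux D2 fuel (lift_end f x) =
                 (map f (walk_aux D1 fuel x).1, (walk_aux D1 fuel x).2).
Proof.
move=> f_link f_pass; elim=> [|fuel IH] x //=.
rewrite f_link; case: (link D1 x) => [//|e] /=.
by rewrite f_pass -[inr (f _)]/(lift_end f (inr _)) IH.
Qed.

Definition term D S : {poly int} :=
  if [&& S \subset crossings D, coherent D S & descending D S]
  then sgnS D S *: 'X^#|S| else 0.

Lemma nablaE D : nabla D = \sum_S term D S.
Proof.
rewrite /nabla /coef.
under eq_bigr => m _ do rewrite scaler_suml big_mkcond /=.
rewrite exchange_big /=; apply: eq_bigr => S _.
have cardS : (#|S| < #|N|.+1)%N by rewrite ltnS max_card.
rewrite (bigD1 (Ordinal cardS)) //= big1 ?addr0; first by rewrite /term eqxx.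
move=> m /negbTE m_neq; case: ifP => // /and4P[_ /eqP cardSm _ _].
by move: m_neq; rewrite -val_eqE /= cardSm eqxx.
Qed.

Lemma eq_sgnS D1 D2 S : {in S, kind D1 =1 kind D2} -> sgnS D1 S = sgnS D2 S.
Proof. by move=> eq_kind; apply: eq_bigr => v /eq_kind ->. Qed.

Lemma sgnS_setD1 D S c : c \in S ->
  sgnS D S = (if kind D c == Some true then 1 else -1) * sgnS D (S :\ c).
Proof.
by move=> cS; rewrite /sgnS (bigD1 c cS); congr (_ * _); apply: eq_bigl => v;
  rewrite in_setD1 andbC.
Qed.

End Diagrams.

Section StrandSwap.
Variables (n : nat) (N : finType) (c0 : N).

Definition swap_strand (e : N * bool) : N * bool :=
  if e.1 == c0 then (e.1, ~~ e.2) else e.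

Lemma swap_strandK : involutive swap_strand.
Proof.
case=> v b; rewrite /swap_strand /=.
by have [->|/negbTE ne] := eqVneq v c0; rewrite /= ?eqxx ?negbK ?ne.
Qed.

Lemma swap_strand_inj : injective swap_strand.
Proof. exact: inv_inj swap_strandK. Qed.

Lemma swap_strand_id v b : v != c0 -> swap_strand (v, b) = (v, b).
Proof. by rewrite /swap_strand => /negbTE ->. Qed.

Lemma swap_atE : @swap_at n N c0 =1 lift_end swap_strand.
Proof. by case=> [//|[v b]]; rewrite /swap_at /swap_strand /=; case: ifP. Qed.

Lemma swap_atK : involutive (@swap_at n N c0).
Proof. by move=> x; rewrite !swap_atE; case: x => //= e; rewrite swap_strandK. Qed.

End StrandSwap.

Section Skein.
Variables (n : nat) (N : finType) (c0 : N) (Tp Tm T0 : tdiag n N).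
Implicit Types (S : {set N}) (k : 'I_n).
Hypotheses (kind_Tp_c0 : kind Tp c0 = Some true)
  (kind_Tm_c0 : kind Tm c0 = Some false) (kind_T0_c0 : kind T0 c0 = None)
  (kind_off_c0 : forall v, v != c0 -> kind Tm v = kind Tp v /\ kind T0 v = kind Tp v)
  (link_Tm : forall x, link Tm x = swap_at c0 (link Tp (swap_at c0 x)))
  (link_T0 : forall x, link T0 x = link Tp x).

Local Notation swap := (swap_strand c0).

Lemma kind_Tm v : v != c0 -> kind Tm v = kind Tp v.
Proof. by case/kind_off_c0. Qed.

Lemma kind_T0 v : v != c0 -> kind T0 v = kind Tp v.
Proof. by case/kind_off_c0. Qed.

Lemma walk_crossing_change S k : walk (smoothS Tm S) k =
  (map swap (walk (smoothS Tp S) k).1, (walk (smoothS Tp S) k).2).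
Proof.
apply: (walk_aux_relabel (D1 := smoothS Tp S) _ _ _ (inl k)) => [x|[v b]] /=.
  by rewrite link_Tm -!swap_atE swap_atK.
rewrite /pass /swap_strand /=; have [->|ne] := eqVneq v c0.
  by case: (c0 \in S); rewrite /= ?kind_Tp_c0 ?kind_Tm_c0 ?negbK.
by rewrite kind_Tm.
Qed.

Lemma walk_smoothing S k : c0 \in S ->
  walk (smoothS T0 (S :\ c0)) k = walk (smoothS Tp S) k.
Proof.
move=> c0S; apply: walk_aux_ext => [v|x] /=; last exact: link_T0.
rewrite in_setD1; have [->|ne] := eqVneq v c0; first by rewrite c0S kind_T0_c0.
by rewrite kind_T0.
Qed.

Lemma traversal_crossing_change S :
  traversal (smoothS Tm S) = map swap (traversal (smoothS Tp S)).
Proof.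
rewrite /traversal map_flatten -map_comp; congr flatten.
by apply: eq_map => k /=; rewrite walk_crossing_change.
Qed.

Lemma traversal_smoothing S : c0 \in S ->
  traversal (smoothS T0 (S :\ c0)) = traversal (smoothS Tp S).
Proof.
by move=> c0S; congr flatten; apply: eq_map => k; rewrite walk_smoothing.
Qed.

Lemma index_crossing_change S e :
  index e (traversal (smoothS Tm S)) = index (swap e) (traversal (smoothS Tp S)).
Proof.
by rewrite traversal_crossing_change -{1}(swap_strandK c0 e)
  (index_map (@swap_strand_inj N c0)).
Qed.

Lemma coherent_crossing_change S : coherent Tm S = coherent Tp S.
Proof.
rewrite /coherent /coherent_order /no_closed.
congr andb; last by apply: eq_forallb => k; rewrite walk_crossing_change.
apply/forallP/forallP => closed_free e; have /existsP[k] := closed_free (swap e);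
  rewrite ?walk_crossing_change /=.
  by rewrite (mem_map (@swap_strand_inj N c0)) => ek; apply/existsP; exists k.
move=> swap_ek; apply/existsP; exists k.
by rewrite walk_crossing_change /= -(swap_strandK c0 e) (mem_map (@swap_strand_inj N c0)).
Qed.

Lemma coherent_smoothing S : c0 \in S -> coherent T0 (S :\ c0) = coherent Tp S.
Proof.
move=> c0S; rewrite /coherent /coherent_order /no_closed; congr andb;
  [apply: eq_forallb => e; apply: eq_existsb => k|apply: eq_forallb => k];
  by rewrite walk_smoothing.
Qed.

Lemma descending_crossing_change S : c0 \notin S ->
  descending Tm S = descending Tp S.
Proof.
move=> c0S; apply: eq_forallb => v; apply/implyP/implyP => desc vS;
  have ne : v != c0 by apply: contraNneq c0S => <-.
  by move: (desc vS); rewrite !index_crossing_change !swap_strand_id.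
by rewrite !index_crossing_change !swap_strand_id ?desc.
Qed.

Lemma crossings_crossing_change : crossings Tm = crossings Tp.
Proof.
apply/setP => v; rewrite !inE; have [->|ne] := eqVneq v c0.
  by rewrite kind_Tp_c0 kind_Tm_c0.
by rewrite kind_Tm.
Qed.

Lemma crossings_smoothing : crossings T0 = crossings Tp :\ c0.
Proof.
apply/setP => v; rewrite !inE; have [->|ne] := eqVneq v c0.
  by rewrite kind_T0_c0.
by rewrite kind_T0.
Qed.

Lemma term_smoothing_c0 S : c0 \in S -> term T0 S = 0.
Proof. by move=> c0S; rewrite /term crossings_smoothing subsetD1 c0S andbF. Qed.

Lemma term_crossing_change_notin S : c0 \notin S -> term Tm S = term Tp S.
Proof.
move=> c0S; rewrite /term crossings_crossing_change coherent_crossing_change.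
rewrite descending_crossing_change // (@eq_sgnS _ _ Tm Tp) // => v vS.
by rewrite kind_Tm //; apply: contraNneq c0S => <-.
Qed.

Section StateWithC0.
Variable S : {set N}.
Hypothesis c0S : c0 \in S.
Let t := traversal (smoothS Tp S).

Lemma subset_crossings_smoothing :
  (S :\ c0 \subset crossings T0) = (S \subset crossings Tp).
Proof.
rewrite crossings_smoothing subsetD1 setD11 andbT -{2}(setD1K c0S) subUset.
by rewrite sub1set inE kind_Tp_c0.
Qed.

Lemma sgnS_positive_c0 : sgnS Tp S = sgnS T0 (S :\ c0).
Proof.
rewrite (sgnS_setD1 _ c0S) kind_Tp_c0 eqxx mul1r; apply: eq_sgnS => v.
by rewrite in_setD1 => /andP[ne _]; rewrite kind_T0.
Qed.

Lemma sgnS_negative_c0 : sgnS Tm S = - sgnS T0 (S :\ c0).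
Proof.
rewrite (sgnS_setD1 _ c0S) kind_Tm_c0 mulN1r; congr (- _); apply: eq_sgnS => v.
by rewrite in_setD1 => /andP[ne _]; rewrite kind_Tm ?kind_T0.
Qed.

Lemma descending_positive_c0 : descending Tp S =
  (index (c0, true) t < index (c0, false) t)%N && descending T0 (S :\ c0).
Proof. by rewrite /descending traversal_smoothing // (forall_in_setD1 _ c0S). Qed.

Lemma descending_negative_c0 : descending Tm S =
  (index (c0, false) t < index (c0, true) t)%N && descending T0 (S :\ c0).
Proof.
rewrite /descending traversal_smoothing // (forall_in_setD1 _ c0S).
rewrite !index_crossing_change /swap_strand eqxx; congr andb.
apply: eq_forallb => v; have [/setD1P[ne _]|//] := boolP (v \in S :\ c0).
by rewrite !index_crossing_change !swap_strand_id.
Qed.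

Lemma mem_traversal_c0 b : coherent Tp S -> (c0, b) \in t.
Proof.
case/andP=> /forallP /(_ (c0, b)) /existsP[k c0_on_k] _.
by apply/flatten_mapP; exists k; rewrite ?mem_enum.
Qed.

Lemma term_crossing_change_in :
  term Tp S - term Tm S = 'X * term T0 (S :\ c0).
Proof.
rewrite /term -subset_crossings_smoothing coherent_smoothing //.
rewrite coherent_crossing_change crossings_crossing_change.
rewrite subset_crossings_smoothing descending_positive_c0 descending_negative_c0.
rewrite sgnS_positive_c0 sgnS_negative_c0 (cardsD1 c0 S) c0S exprS !scalerAr.
have [crossS|] /= := boolP (S \subset crossings Tp); last by rewrite mulr0 subr0.
have [cohS|] /= := boolP (coherent Tp S); last by rewrite mulr0 subr0.
case: (descending T0 (S :\ c0)); rewrite ?andbF ?mulr0 ?subr0 //.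
case: ltngtP => [_|_|same_index]; rewrite ?scaleNr ?mulrN ?subr0 ?sub0r ?opprK //.
have /index_inj := same_index; move/(_ (c0, true)).
by case/(_ (mem_traversal_c0 _ cohS) (mem_traversal_c0 _ cohS)).
Qed.

End StateWithC0.

Lemma term_crossing_change S : term Tp S - term Tm S =
  if c0 \in S then 'X * term T0 (S :\ c0) else 0.
Proof.
case: ifPn => c0S; first exact: term_crossing_change_in.
by rewrite term_crossing_change_notin ?subrr.
Qed.

Lemma skein_relation : nabla Tp - nabla Tm = 'X * nabla T0.
Proof.
rewrite !nablaE -sumrB (eq_bigr _ (fun S _ => term_crossing_change S)) -big_mkcond.
rewrite (reindex_onto (fun S => c0 |: S) (fun S => S :\ c0)) => [|S]; last exact: setD1K.
rewrite mulr_sumr [RHS](bigID (fun S => c0 \in S)) /= [X in _ = X + _]big1;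
  last by move=> S /term_smoothing_c0 ->; rewrite mulr0.
rewrite add0r (eq_bigl (fun S => c0 \notin S)) => [|S]; last first.
  rewrite setU11 /=; have [c0S|c0S] := boolP (c0 \in S); last by rewrite setU1K ?eqxx.
  by apply/eqP => S_eq; move: c0S; rewrite -S_eq setD11.
by apply: eq_bigr => S c0S; rewrite setU1K.
Qed.

End Skein.

Theorem mainTheorem3 (n : nat) (N : finType) (c0 : N) (Tp Tm T0 : tdiag n N) :
  (0 < n)%N ->
  kind Tp c0 = Some true ->
  kind Tm c0 = Some false ->
  kind T0 c0 = None ->
  (forall v, v != c0 -> kind Tm v = kind Tp v /\ kind T0 v = kind Tp v) ->
  (forall x, link Tm x = swap_at c0 (link Tp (swap_at c0 x))) ->
  (forall x, link T0 x = link Tp x) ->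
  nabla Tp - nabla Tm = 'X * nabla T0.
Proof. by move=> _; exact: skein_relation. Qed.
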